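(* Let $k$ be a field of prime characteristic $p$. Define $T$-spaces of $k_0\langle X\rangle$ by $H_1=\{x_1^p\}^S$, $H_{n+1}=(H_nH_1)^S$, and $S^{(p)}_1=\{S^{(p)}\}^S$, $S^{(p)}_{n+1}=(S^{(p)}_nS^{(p)}_1)^S$ for $n\ge1$, where $S^{(p)}=\sum_{\sigma\in\Sigma_p}\prod_{i=1}^p x_{\sigma(i)}$. Then $S^{(p)}_m\subseteq H_m$ for every $m\ge1$.
   Context: $X=\{x_1,x_2,\ldots\}$ is countably infinite; $k_0\langle X\rangle$ is the free associative (non-unital) $k$-algebra on $X$. A $T$-space is a $k$-subspace of $k_0\langle X\rangle$ invariant under every algebra endomorphism of $k_0\langle X\rangle$; $(A)^S$ is the $T$-space generated by a subset $A$. For subsets $A,B$, $AB=\{ab:a\in A,b\in B\}$. $\Sigma_p$ is the symmetric group on $p$ letters. *)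

From HB Require Import structures.
From mathcomp Require Import all_boot all_order all_fingroup all_algebra.
Set Implicit Arguments. Unset Strict Implicit. Unset Printing Implicit Defensive.
Import GRing.Theory.
Local Open Scope ring_scope.

(* The free non-unital associative algebra k_0<X> on X = {x_0, x_1, ...}
   (x_i indexed by nat; the paper's x_{i+1} is our index i).
   An element is represented by its coefficient function on words
   (seq nat); it is a polynomial when it is finitely supported and has
   zero coefficient on the empty word (non-unital). *)
Definition fa (k : fieldType) := seq nat -> k.

Section FreeAlg.
Variable k : fieldType.

Definition fzero : fa k := fun _ => 0.
Definition fadd (f g : fa k) : fa k := fun w => f w + g w.
Definition fscale (c : k) (f : fa k) : fa k := fun w => c * f w.
Definition fmul (f g : fa k) : fa k :=
  fun w => \sum_(1 <= i < size w) f (take i w) * g (drop i w).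

Definition is_poly (f : fa k) : Prop :=
  f [::] = 0 /\ exists s : seq (seq nat), forall w, f w != 0 -> w \in s.

Definition mono (w : seq nat) : fa k := fun u => if u == w then 1 else 0.

(* algebra endomorphisms of k_0<X> (a map on coefficient functions whose
   behaviour on polynomials is that of a k-algebra endomorphism) *)
Definition is_endo (phi : fa k -> fa k) : Prop :=
  [/\ forall f, is_poly f -> is_poly (phi f),
      forall f g, is_poly f -> is_poly g -> phi (fadd f g) = fadd (phi f) (phi g),
      forall c f, is_poly f -> phi (fscale c f) = fscale c (phi f)
    & forall f g, is_poly f -> is_poly g -> phi (fmul f g) = fmul (phi f) (phi g)].

Definition is_Tspace (V : fa k -> Prop) : Prop :=
  [/\ forall f, V f -> is_poly f,
      V fzero,
      forall f g, V f -> V g -> V (fadd f g),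
      forall c f, V f -> V (fscale c f)
    & forall phi f, is_endo phi -> V f -> V (phi f)].

Definition Tgen (A : fa k -> Prop) : fa k -> Prop :=
  fun f => forall V, is_Tspace V -> (forall a, A a -> V a) -> V f.

Definition setmul (A B : fa k -> Prop) : fa k -> Prop :=
  fun h => exists a b, [/\ A a, B b & h = fmul a b].

(* given A_1, the sequence A_1, A_{n+1} = (A_n A_1)^S; Tseq A1 m = A_m (m >= 1) *)
Fixpoint Titer (A1 : fa k -> Prop) (n : nat) : fa k -> Prop :=
  match n with
  | 0 => A1
  | n'.+1 => Tgen (setmul (Titer A1 n') A1)
  end.
Definition Tseq (A1 : fa k -> Prop) (m : nat) := Titer A1 m.-1.

Definition xpow (p : nat) : fa k := mono (nseq p 0%N).

Definition Sp (p : nat) : fa k :=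
  fun u => \sum_(s : 'S_p) mono [seq nat_of_ord (s i) | i <- enum 'I_p] u.

Definition H1 (p : nat) : fa k -> Prop := Tgen (fun f => f = xpow p).
Definition S1 (p : nat) : fa k -> Prop := Tgen (fun f => f = Sp p).

End FreeAlg.

From mathcomp Require Import all_boot all_order all_fingroup all_algebra.
From Stdlib Require Import FunctionalExtensionality.
Set Implicit Arguments. Unset Strict Implicit. Unset Printing Implicit Defensive.
Import GRing.Theory.
Local Open Scope ring_scope.

(* S^(p) is a signed sum of endomorphic images of x_1^p, by the polarization
   identity  S^(p) = sum_J (-1)^(p - |J|) (sum_(i in J) x_i)^p,  J ranging
   over the subsets of {1, ..., p}: expanding the right-hand side, inclusion-
   exclusion keeps exactly the words in which every x_i occurs, i.e. the
   permutations.  Hence every T-space containing x_1^p contains S^(p), so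
   S^(p)_1 is contained in H_1, and A |-> (A A_1)^S is monotone in A_1.
   The identity holds over any field. *)

Section Substitution.
Variable k : fieldType.

(* The endomorphism  x_0 |-> sum_i c i x_i,  x_j |-> 0 for j > 0. *)
Definition subst_x0 (c : nat -> k) (f : fa k) : fa k :=
  fun w => f (nseq (size w) 0%N) * \prod_(x <- w) c x.

Fixpoint words (L : seq nat) (n : nat) : seq (seq nat) :=
  if n is n'.+1 then [seq x :: v | x <- L, v <- words L n'] else [:: [::]].

Lemma mem_words L v : all (mem L) v -> v \in words L (size v).
Proof.
elim: v => [|x v IH] //= /andP [hx hv].
exact: (allpairs_f (fun a b => a :: b) hx (IH hv)).
Qed.

Lemma subst_x0_poly c N f :
  (forall x, c x != 0 -> (x < N)%N) -> is_poly f -> is_poly (subst_x0 c f).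
Proof.
move=> hc [f0 [s hs]]; split; first by rewrite /subst_x0 /= f0 mul0r.
exists (flatten [seq words (iota 0 N) (size u) | u <- s]) => w.
rewrite /subst_x0 mulf_eq0 negb_or => /andP [hf hw].
apply/flatten_mapP; exists (nseq (size w) 0%N); first exact: hs.
rewrite size_nseq; apply: mem_words; apply/allP => x xw.
rewrite inE mem_iota add0n; apply: hc.
by move: hw; rewrite prodf_seq_neq0 => /allP; apply.
Qed.

Lemma subst_x0M c f g : subst_x0 c (fmul f g) = fmul (subst_x0 c f) (subst_x0 c g).
Proof.
apply: functional_extensionality => w.
rewrite /subst_x0 /fmul size_nseq big_distrl /=.
apply: eq_big_nat => i /andP [_ iw].
rewrite take_nseq ?(ltnW iw) // drop_nseq size_take iw size_drop.
by rewrite mulrACA -big_cat cat_take_drop.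
Qed.

Lemma subst_x0_endo c N :
  (forall x, c x != 0 -> (x < N)%N) -> is_endo (subst_x0 c).
Proof.
move=> hc; split=> [f|f g _ _|a f _|f g _ _].
- exact: subst_x0_poly hc.
- by apply: functional_extensionality => w; rewrite /subst_x0 /fadd mulrDl.
- by apply: functional_extensionality => w; rewrite /subst_x0 /fscale mulrA.
- exact: subst_x0M.
Qed.

Lemma subst_x0_xpow c p w :
  subst_x0 c (xpow k p) w = (size w == p)%:R * \prod_(x <- w) c x.
Proof.
rewrite /subst_x0 /xpow /mono; congr (_ * _).
case: eqP => [E | ne]; first by rewrite -(size_nseq (size w) 0%N) E size_nseq eqxx.
by case: eqP => // E; case: ne; rewrite E.
Qed.

End Substitution.

Section InclusionExclusion.
Variables (R : comNzRingType) (p : nat).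

Lemma prodr_nat_bool (T : finType) (P : pred T) :
  \prod_(i : T) ((P i)%:R : R) = ([forall i, P i])%:R.
Proof.
case: forallP => [H | H]; first by rewrite big1 // => i _; rewrite H.
have [i Hi] : exists i, ~~ P i.
  by apply/existsP; rewrite -negb_forall; apply/forallP.
by rewrite (bigD1 i) //= (negbTE Hi) mul0r.
Qed.

(* Substituting [indicator J] turns x_0 into sum_(i in J) x_i. *)
Definition indicator (J : {set 'I_p}) (x : nat) : R :=
  if insub x is Some i then (i \in J)%:R else 0.

Lemma indicator_bound J x : indicator J x != 0 -> (x < p)%N.
Proof. by rewrite /indicator; case: insubP => //=; rewrite eqxx. Qed.

Lemma indicator_val J (i : 'I_p) : indicator J (val i) = (i \in J)%:R.
Proof. by rewrite /indicator valK. Qed.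

Definition sign (J : {set 'I_p}) : R := \prod_(i : 'I_p) (if i \in J then 1 else -1).

Definition word (g : 'I_p -> 'I_p) : seq nat := [seq val (g i) | i <- enum 'I_p].

Lemma sign_prod_indicator (g : 'I_p -> 'I_p) J :
  sign J * \prod_(x <- word g) indicator J x =
  \prod_(i : 'I_p) (if i \in J then 1 else - (i \notin codom g)%:R).
Proof.
rewrite /word big_map enumT.
under eq_bigr do rewrite indicator_val.
have -> : \prod_(i : 'I_p) (if i \in J then 1 else - (i \notin codom g)%:R) =
    \prod_(i : 'I_p) ((if i \in J then 1 else -1) * ((i \in J) || (i \notin codom g))%:R) :> R.
  by apply: eq_bigr => i _; case: (i \in J); rewrite ?mul1r ?mulN1r.
rewrite big_split /= !prodr_nat_bool /sign; congr (_ * (nat_of_bool _)%:R).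
apply/forallP/forallP => [gJ i | H i]; last by move: (H (g i)); rewrite codom_f orbF.
by case: (boolP (i \in codom g)) => [/codomP [j ->] | _]; rewrite ?gJ ?orbT.
Qed.

Lemma sum_sign_prod_indicator (g : 'I_p -> 'I_p) :
  \sum_(J : {set 'I_p}) sign J * \prod_(x <- word g) indicator J x =
  ([forall i, i \in codom g])%:R.
Proof.
under eq_bigr do rewrite sign_prod_indicator.
rewrite -(bigA_distr 1 _ (fun i => 1) (fun i => - (i \notin codom g)%:R)).
rewrite -prodr_nat_bool; apply: eq_bigr => i _.
by case: (i \in codom g) => /=; rewrite ?subr0 ?subrr.
Qed.

End InclusionExclusion.

Arguments indicator {R p} J x.
Arguments sign {R p} J.

Lemma onto_inj (T : finType) (g : T -> T) : (forall i, i \in codom g) -> injective g.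
Proof.
move=> onto; apply: in2T; apply/image_injP; rewrite eqn_leq leq_image_card /=.
by apply/subset_leq_card/subsetP => i _; apply: onto.
Qed.

Section Polarization.
Variables (k : fieldType) (p : nat).

Lemma eq_word (g h : 'I_p -> 'I_p) : (word g == word h) = [forall i, g i == h i].
Proof.
apply/eqP/forallP => [E i | E]; last by apply: eq_map => i; rewrite (eqP (E i)).
have E' : map g (enum 'I_p) = map h (enum 'I_p).
  by apply: (inj_map val_inj); move: E; rewrite /word -!map_comp.
by apply/eqP; apply: (proj2 (eq_in_map _ _ _) E'); rewrite mem_enum.
Qed.

Lemma Sp_word (g : 'I_p -> 'I_p) : Sp k p (word g) = ([forall i, i \in codom g])%:R.
Proof.
rewrite /Sp /mono (eq_bigr (fun s : 'S_p => ([forall i, g i == s i])%:R)); last first.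
  by move=> s _; rewrite -eq_word; case: eqP.
case: (boolP [forall i, i \in codom g]) => [/forallP onto | notonto].
  have g_inj := onto_inj onto.
  have g_perm : [forall i, g i == perm g_inj i] by apply/forallP => i; rewrite permE.
  rewrite (bigD1 (perm g_inj)) //= big1 => [|s hs]; first by rewrite g_perm addr0.
  case: forallP => // E; case/eqP: hs; apply/permP => i.
  by rewrite permE; apply/eqP; rewrite eq_sym.
rewrite big1 // => s _; case: forallP => // E; case/negP: notonto; apply/forallP => i.
by rewrite -[i](permKV s) -(eqP (E _)) codom_f.
Qed.

Lemma Sp_polarization w :
  Sp k p w = \sum_(J : {set 'I_p}) sign J * subst_x0 (indicator J) (xpow k p) w.
Proof.
under eq_bigr do rewrite subst_x0_xpow.
have [size_w | size_w] := eqVneq (size w) p; last first.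
  rewrite big1 => [|J _]; last by rewrite mul0r mulr0.
  rewrite /Sp big1 // => s _; rewrite /mono; case: eqP => // E.
  by case/negP: size_w; rewrite E size_map size_enum_ord.
under eq_bigr do rewrite mul1r.
have [w_lt | w_ge] := boolP (all (fun x => x < p)%N w); last first.
  rewrite big1 => [|J _]; last first.
    apply/eqP; rewrite mulf_eq0; apply/orP; right; rewrite prodf_seq_eq0.
    move: w_ge; rewrite -has_predC; apply: sub_has => x /=.
    by apply: contraR => /indicator_bound ->.
  rewrite /Sp big1 // => s _; rewrite /mono; case: eqP => // E.
  by case/negP: w_ge; rewrite E all_map; apply/allP => i _ /=.
pose g := fun j : 'I_p => insubd j (nth 0%N w j).
suff -> : w = word g by rewrite Sp_word sum_sign_prod_indicator.
rewrite /word -(mkseq_nth 0%N w) /mkseq size_w -val_enum_ord -map_comp.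
apply: eq_map => j /=; rewrite /g insubdK //.
by apply: (allP w_lt); rewrite mem_nth // size_w.
Qed.

End Polarization.

Section Tspaces.
Variable k : fieldType.

Lemma Tspace_sum (V : fa k -> Prop) (T : Type) (s : seq T) (F : T -> fa k) :
  is_Tspace V -> (forall x, V (F x)) -> V (fun w => \sum_(x <- s) F x w).
Proof.
case=> _ V0 VD _ _ VF; elim: s => [|x s IH].
  suff -> : (fun w => \sum_(x <- [::]) F x w) = fzero k by [].
  by apply: functional_extensionality => w; rewrite big_nil.
suff -> : (fun w => \sum_(y <- x :: s) F y w) = fadd (F x) (fun w => \sum_(y <- s) F y w).
  exact: VD.
by apply: functional_extensionality => w; rewrite big_cons.
Qed.

Lemma Tspace_Sp (p : nat) (V : fa k -> Prop) :
  is_Tspace V -> V (xpow k p) -> V (Sp k p).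
Proof.
move=> VT Vx; rewrite (functional_extensionality _ _ (@Sp_polarization k p)).
apply: Tspace_sum => // J; case: VT => _ _ _ VZ Vend.
by apply: VZ; apply: Vend Vx; apply: subst_x0_endo (@indicator_bound _ _ J).
Qed.

Lemma S1_sub_H1 p (f : fa k) : S1 p f -> H1 p f.
Proof. by move=> Sf V VT Vx; apply: Sf => // _ ->; apply: Tspace_Sp; last exact: Vx. Qed.

Lemma Titer_mono (A B : fa k -> Prop) n f :
  (forall g, A g -> B g) -> Titer A n f -> Titer B n f.
Proof.
move=> AB; elim: n f => [|n IH] f /=; first exact: AB.
move=> Af V VT VB; apply: Af => // _ [a [b [Aa Ab ->]]].
by apply: VB; exists a, b; split; [apply: IH | apply: AB |].
Qed.

End Tspaces.

Theorem corollary4p2 (k : fieldType) (p : nat) (hp : prime p)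
  (hchar : p \in [pchar k]%R) (m : nat) (hm : (1 <= m)%N) :
  forall f : fa k, Tseq (S1 p) m f -> Tseq (H1 p) m f.
Proof. by move=> f; apply: Titer_mono; apply: S1_sub_H1. Qed.
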